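(* Let $n\ge 2$. For a partition $\lambda$ of $n$, let $u_\lambda$ be the number of unrooted binary trees with leaf set $[n]$ fixed by the relabeling action of a permutation $\sigma\in\mathfrak{S}_n$ of cycle type $\lambda$ (equivalently, $u_\lambda$ is the coefficient of $p_\lambda/z_\lambda$ in $Z_U=h_3[Z_R]+p_1Z_R+Z_R-Z_R^2-p_1$), let $\lambda^2$ be the cycle type of $\sigma^2$, and let $z_\lambda=\prod_{i\ge1}i^{m_i}m_i!$ where $m_i$ is the number of parts of $\lambda$ equal to $i$. Then the number of unlabeled unrooted tanglegrams with $n$ leaves is $\sum_{\lambda\vdash n} u_\lambda^2/z_\lambda$, and the number of unlabeled unrooted unordered tanglegrams with $n$ leaves is \[ \frac12\sum_{\lambda\vdash n}\frac{u_\lambda^2}{z_\lambda}+\frac12\sum_{\lambda\vdash n}\frac{u_{\lambda^2}}{z_\lambda}. \]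
   Context: An unrooted binary tree with leaf set $A$ is a tree in which every vertex has degree one or three, whose leaves (degree-one vertices) are labeled bijectively by $A$ and whose degree-three vertices are unlabeled; the one-vertex tree is excluded; trees are considered up to label-preserving isomorphism. A (rooted) binary tree with leaf set $A$ is a rooted tree in which every vertex has zero or two unordered children, with leaves labeled bijectively by $A$ and internal vertices unlabeled (the single labeled vertex counts). $\mathfrak{S}_n$ acts on trees with leaf set $[n]$ by relabeling leaves. An unrooted tanglegram with leaf set $[n]$ is an ordered pair of unrooted binary trees with leaf set $[n]$; an unrooted unordered tanglegram is an unordered pair (multiset of size two) of such trees. $\mathfrak{S}_n$ acts on both by relabeling the two trees simultaneously, and the unlabeled objects with $n$ leaves are the orbits. Cycle index of a species $F$: $Z_F=\sum_{n\ge0}\frac1{n!}\sum_{\sigma\in\mathfrak{S}_n}\mathrm{fix}\,F[\sigma]\,p_\sigma$ with $p_\sigma=\prod_i p_i^{\sigma_i}$, $\sigma_i$ the number of $i$-cycles; $Z_R$, $Z_U$ are the cycle indices of rooted and unrooted binary trees; $h_3=\tfrac16(p_1^3+3p_1p_2+2p_3)$; plethysm $f[g]$ replaces each $p_i$ in $f$ by $g(p_i,p_{2i},\dots)$. *)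

From mathcomp Require Import all_boot all_order all_fingroup all_algebra.
Set Implicit Arguments. Unset Strict Implicit. Unset Printing Implicit Defensive.

(* Vertices of an unrooted binary tree with leaf set [n]: the n labeled leaves
   (inl i) and n-2 unlabeled internal vertices (inr j).  A tree whose vertices
   have degree 1 or 3 with n leaves has exactly n-2 degree-3 vertices. *)
Definition V (n : nat) := ('I_n + 'I_n.-2)%type.

Definition graph (n : nat) := {set (V n * V n)}.

Definition deg n (G : graph n) (x : V n) : nat := #|[set y | (x, y) \in G]|.

Definition is_ubtree n (G : graph n) : bool :=
  [&& [forall x, (x, x) \notin G],
      [forall x, forall y, ((x, y) \in G) == ((y, x) \in G)],
      [forall x, forall y, connect (fun a b => (a, b) \in G) x y],
      #|G| == 2 * (#|{: V n}|).-1,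
      [forall i, deg G (inl i) == 1] &
      [forall j, deg G (inr j) == 3]].

Definition vmap n (s : {perm 'I_n}) (p : {perm 'I_n.-2}) (v : V n) : V n :=
  match v with inl i => inl (s i) | inr j => inr (p j) end.

Definition gmap n (f : V n -> V n) (G : graph n) : graph n :=
  [set (f e.1, f e.2) | e in G].

Definition UBT n : {set graph n} := [set G : graph n | is_ubtree G].

Definition isoclass n (G : graph n) : {set graph n} :=
  [set H in UBT n | [exists p : {perm 'I_n.-2}, gmap (vmap 1 p) G == H]].

(* unrooted binary trees with leaf set [n], up to label-preserving isomorphism *)
Definition Trees n : {set {set graph n}} := [set isoclass G | G in UBT n].

Definition actT n (s : {perm 'I_n}) (C : {set graph n}) : {set graph n} :=
  [set gmap (vmap s 1) G | G in C].

Definition Tangle n := setX (Trees n) (Trees n).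
Definition orbT n (x : {set graph n} * {set graph n}) :=
  [set (actT s x.1, actT s x.2) | s : {perm 'I_n}].
Definition num_tanglegrams n : nat := #|[set orbT x | x in Tangle n]|.

(* unordered tanglegrams: a multiset {C1, C2} of size two is encoded by the
   set [set C1; C2] (this encoding is injective on size-two multisets). *)
Definition UTangle n : {set {set {set graph n}}} :=
  [set [set x.1; x.2] | x in Tangle n].
Definition orbU n (P : {set {set graph n}}) :=
  [set [set actT s C | C in P] | s : {perm 'I_n}].
Definition num_utanglegrams n : nat := #|[set orbU P | P in UTangle n]|.

Definition fixU n (s : {perm 'I_n}) : nat :=
  #|[set C in Trees n | actT s C == C]|.

(* Partitions of n in multiplicity notation: l i = number of parts equal to i+1. *)
Definition partn_t n := {ffun 'I_n -> 'I_n.+1}.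
Definition is_partn n (l : partn_t n) : bool := \sum_(i < n) i.+1 * l i == n.

Definition ctype n (s : {perm 'I_n}) : partn_t n :=
  [ffun i : 'I_n => inord #|[set c in porbits s | #|c| == i.+1]|].

Definition zee n (l : partn_t n) : nat := \prod_(i < n) (i.+1 ^ l i * (l i)`!).

Definition ulam n (l : partn_t n) : nat :=
  if [pick s : {perm 'I_n} | ctype s == l] is Some s then fixU s else 0.

Definition lsq n (l : partn_t n) : partn_t n :=
  if [pick s : {perm 'I_n} | ctype s == l] is Some s then ctype (s ^+ 2) else l.

(* Both counts come from the Cauchy-Frobenius (Burnside) lemma for the
   relabeling action of S_n.  A pair of trees is fixed by s iff both trees are,
   so n! times the number of tanglegrams is sum_s u(s)^2, where u(s) counts the
   trees fixed by s.  An unordered pair {C, D} is fixed by s iff s fixes both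
   trees or swaps them; counting ordered preimages gives
   2 #{fixed unordered pairs} = u(s)^2 + u(s^2).  Both summands are class
   functions of s, so the sums regroup by cycle type: permutations with the same
   cycle type are conjugate, and the class of type l has n!/z_l elements since
   the centralizer of s has order z_l, obtained from orbit-stabilizer by
   removing one cycle of s at a time. *)

From Pilot Require Import Defs.
From mathcomp Require Import all_boot all_order all_fingroup all_algebra.
From mathcomp Require Import zify ring.
Set Implicit Arguments. Unset Strict Implicit. Unset Printing Implicit Defensive.

Section PermCycles.
Variable T : finType.
Implicit Types (u v t : {perm T}) (x y z : T).

Definition cycle_len u x := #|porbit u x|.

Definition cycle_pos u x y := index y (traject u x (cycle_len u x)).

Definition cycles u k : {set {set T}} := [set c in porbits u | #|c| == k].

Lemma cycle_len_gt0 u x : 0 < cycle_len u x.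
Proof. by rewrite lt0n card_porbit_neq0. Qed.

Lemma porbitsP u c : reflect (exists x, c = porbit u x) (c \in porbits u).
Proof. by apply: (iffP imsetP) => [[x _ ->] | [x ->]]; exists x. Qed.

Lemma porbit_porbits u x : porbit u x \in porbits u.
Proof. by apply/porbitsP; exists x. Qed.

Lemma porbit_eq u x y : y \in porbit u x -> porbit u y = porbit u x.
Proof. by move=> xy; apply/eqP; rewrite eq_porbit_mem. Qed.

Lemma porbit_mem_porbits u c y : c \in porbits u -> y \in c -> porbit u y = c.
Proof. by case/porbitsP=> x -> /porbit_eq. Qed.

Lemma pick_porbits u x0 c : c \in porbits u -> odflt x0 [pick y in c] \in c.
Proof. by case/porbitsP=> x ->; case: pickP => //= /(_ x); rewrite porbit_id. Qed.

Lemma porbit_iter u i x : porbit u (iter i u x) = porbit u x.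
Proof. by rewrite -permX porbit_perm. Qed.

Lemma porbit_step u x : porbit u (u x) = porbit u x.
Proof. exact: (porbit_iter u 1). Qed.

Lemma cycle_len_porbit u x y : y \in porbit u x -> cycle_len u y = cycle_len u x.
Proof. by move=> xy; rewrite /cycle_len (porbit_eq xy). Qed.

Lemma iter_mod_cycle_len u x m : iter (m %% cycle_len u x) u x = iter m u x.
Proof.
have iter_mul q : iter (q * cycle_len u x) u x = x.
  by elim: q => //= q IHq; rewrite mulSn iterD IHq iter_porbit.
by rewrite {2}(divn_eq m (cycle_len u x)) addnC iterD iter_mul.
Qed.

Lemma iter_cycle_inj u x i j : i < cycle_len u x -> j < cycle_len u x ->
  iter i u x = iter j u x -> i = j.
Proof.
move=> ilt jlt eq_ij; apply/eqP.
rewrite -(nth_uniq x _ _ (uniq_traject_porbit u x)) ?size_traject //.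
by rewrite !nth_traject // eq_ij.
Qed.

Lemma cycle_pos_lt u x y : y \in porbit u x -> cycle_pos u x y < cycle_len u x.
Proof.
rewrite porbit_traject => xy.
by rewrite /cycle_pos -[X in _ < X](size_traject u x) index_mem.
Qed.

Lemma iter_cycle_pos u x y : y \in porbit u x -> iter (cycle_pos u x y) u x = y.
Proof.
move=> xy; rewrite -(nth_traject u (cycle_pos_lt xy) x).
by rewrite nth_index // -porbit_traject.
Qed.

Lemma cycle_pos_id u x : cycle_pos u x x = 0.
Proof.
by rewrite /cycle_pos; case: (cycle_len u x) (cycle_len_gt0 u x) => //= k _; rewrite eqxx.
Qed.

Lemma cycle_pos_step u x y : y \in porbit u x ->
  cycle_pos u x (u y) = (cycle_pos u x y).+1 %% cycle_len u x.
Proof.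
move=> xy; have ltk : (cycle_pos u x y).+1 %% cycle_len u x < cycle_len u x.
  by rewrite ltn_pmod ?cycle_len_gt0.
rewrite -{1}(iter_cycle_pos xy) -[u _]/(iter (cycle_pos u x y).+1 u x).
rewrite -iter_mod_cycle_len /cycle_pos -(nth_traject u ltk) index_uniq //.
  by rewrite size_traject.
exact: uniq_traject_porbit.
Qed.

Lemma iter_conj u t i x : iter i (u ^ t)%g (t x) = t (iter i u x).
Proof. by elim: i => //= i ->; rewrite permJ. Qed.

Lemma porbit_conj u t x : porbit (u ^ t)%g (t x) = t @: porbit u x.
Proof.
apply/setP => z; apply/porbitP/imsetP => [[i ->] | [y /porbitP [i ->] ->]].
  by exists ((u ^+ i)%g x); rewrite ?mem_porbit // !permX iter_conj.
by exists i; rewrite !permX iter_conj.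
Qed.

Lemma porbits_conj u t : porbits (u ^ t)%g = (fun c : {set T} => t @: c) @: porbits u.
Proof.
apply/setP => c; apply/porbitsP/imsetP => [[x ->] | [_ /porbitsP [x ->] ->]].
  exists (porbit u (t^-1%g x)); first by apply/porbitsP; exists (t^-1%g x).
  by rewrite -porbit_conj permKV.
by exists (t x); rewrite porbit_conj.
Qed.

Lemma card_cycles_conj u t k : #|cycles (u ^ t)%g k| = #|cycles u k|.
Proof.
have card_im (c : {set T}) : #|t @: c| = #|c| by apply: card_imset; apply: perm_inj.
have -> : cycles (u ^ t)%g k = (fun c : {set T} => t @: c) @: cycles u k.
  apply/setP => c; rewrite inE porbits_conj; apply/andP/imsetP.
    by case=> /imsetP [d dP ->]; rewrite card_im => dk; exists d; rewrite // inE dP.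
  by case=> d /setIdP [dP dk] ->; rewrite imset_f // card_im.
by apply: card_imset; apply: imset_inj; apply: perm_inj.
Qed.

End PermCycles.

Section Transport.
Variables (T : finType) (u v : {perm T}) (cmatch : {set T} -> {set T}).
Variables rootu rootv : {set T} -> T.
Hypothesis cmatch_porbits : {in porbits u, forall c, cmatch c \in porbits v}.
Hypothesis card_cmatch : {in porbits u, forall c, #|cmatch c| = #|c|}.
Hypothesis cmatch_inj : {in porbits u &, injective cmatch}.
Hypothesis rootu_mem : {in porbits u, forall c, rootu c \in c}.
Hypothesis rootv_mem : {in porbits v, forall c, rootv c \in c}.

(* The point at offset i from the root of its u-cycle c goes to the point at
   offset i from the root of the v-cycle matched with c. *)
Definition transport x :=
  iter (cycle_pos u (rootu (porbit u x)) x) v (rootv (cmatch (porbit u x))).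

Let root_facts x (c := porbit u x) (r' := rootv (cmatch c)) :
  [/\ x \in porbit u (rootu c), cycle_len u (rootu c) = #|c|,
      porbit v (transport x) = cmatch c & cycle_len v r' = #|c|].
Proof.
have rootc := rootu_mem (porbit_porbits u x).
have dP := cmatch_porbits (porbit_porbits u x).
have r'P := porbit_mem_porbits dP (rootv_mem dP).
rewrite /transport porbit_iter porbit_sym rootc /cycle_len r'P.
by rewrite card_cmatch ?porbit_porbits // (porbit_eq rootc).
Qed.

Lemma transport_step x : transport (u x) = v (transport x).
Proof.
have [xr len_r _ len_r'] := root_facts x.
rewrite /transport porbit_step cycle_pos_step // len_r -len_r'.
by rewrite -[v (iter _ _ _)]/(iter _.+1 v _) iter_mod_cycle_len.
Qed.

Lemma transport_inj : injective transport.
Proof.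
move=> x y; have [xr len_r r'P len_r'] := root_facts x.
have [yr len_ry r'Py len_r'y] := root_facts y.
move=> eq_xy; have eq_c : porbit u x = porbit u y.
  by apply: cmatch_inj; rewrite ?porbit_porbits // -r'P -r'Py eq_xy.
move: eq_xy xr yr len_r; rewrite /transport -eq_c => eq_xy xr yr len_r.
rewrite -(iter_cycle_pos xr) -(iter_cycle_pos yr); congr iter.
by apply: iter_cycle_inj eq_xy; rewrite len_r' -len_r cycle_pos_lt.
Qed.

Lemma transport_root c : c \in porbits u -> transport (rootu c) = rootv (cmatch c).
Proof.
move=> cP; rewrite /transport (porbit_mem_porbits cP (rootu_mem cP)).
by rewrite cycle_pos_id.
Qed.

Lemma transport_fixed x (c := porbit u x) :
  v = u -> cmatch c = c -> rootv c = rootu c -> transport x = x.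
Proof.
have [xr _ _ _] := root_facts x.
by rewrite /transport -/c => -> -> ->; apply: iter_cycle_pos.
Qed.

Definition transport_perm := perm transport_inj.

Lemma transport_conj : (u ^ transport_perm)%g = v.
Proof.
apply/permP => x; rewrite -[x in LHS](permKV transport_perm) permJ.
by rewrite [LHS]permE transport_step -(permE transport_inj) -/transport_perm permKV.
Qed.

End Transport.

Section SameCycleType.
Variables (T : finType) (u v : {perm T}).
Hypothesis same_cycles : forall k, #|cycles u k| = #|cycles v k|.

Let cmatch (c : {set T}) :=
  nth set0 (enum (cycles v #|c|)) (index c (enum (cycles u #|c|))).

Let porbit_cycles w (c : {set T}) : c \in porbits w -> c \in cycles w #|c|.
Proof. by move=> cP; rewrite inE cP eqxx. Qed.

Let cmatch_cycles (c : {set T}) : c \in porbits u -> cmatch c \in cycles v #|c|.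
Proof.
move=> /porbit_cycles cP; rewrite -mem_enum mem_nth // -cardE -same_cycles.
by rewrite [#|cycles u _|]cardE index_mem mem_enum.
Qed.

Let card_cmatch (c : {set T}) : c \in porbits u -> #|cmatch c| = #|c|.
Proof. by move/cmatch_cycles; rewrite inE => /andP [_ /eqP]. Qed.

Let cmatch_inj : {in porbits u &, injective cmatch}.
Proof.
move=> c1 c2 c1P c2P eq_c.
have eq_k : #|c1| = #|c2| by rewrite -card_cmatch // eq_c card_cmatch.
have memc w (c : {set T}) : c \in porbits w -> c \in enum (cycles w #|c|).
  by move=> /porbit_cycles; rewrite mem_enum.
rewrite -(nth_index set0 (memc _ _ c1P)) -(nth_index set0 (memc _ _ c2P)) -eq_k.
congr nth; apply/eqP; move: eq_c; rewrite /cmatch -eq_k => /eqP.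
rewrite nth_uniq ?enum_uniq // -cardE -same_cycles [#|cycles u _|]cardE index_mem.
  by rewrite memc.
by rewrite eq_k memc.
Qed.

Lemma conj_same_cycles : exists t, v = (u ^ t)%g.
Proof.
case: (pickP (@predT T)) => [x0 _ | T0]; last first.
  by exists 1%g; apply/permP => x; have := T0 x.
pose root (c : {set T}) := odflt x0 [pick y in c].
have cmatch_porbits : {in porbits u, forall c, cmatch c \in porbits v}.
  by move=> c /cmatch_cycles; rewrite inE => /andP [].
exists (@transport_perm _ u v cmatch root root cmatch_porbits card_cmatch
          cmatch_inj (@pick_porbits _ u x0) (@pick_porbits _ v x0)).
by rewrite transport_conj.
Qed.

End SameCycleType.

(* The centralizer order prod_k k^(m k) (m k)! of a permutation of a set of
   size at most N with m k cycles of length k. *)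
Definition zprod N (m : nat -> nat) := \prod_(0 <= i < N) (i.+1 ^ m i.+1 * (m i.+1)`!).

Lemma zprod_step N (m m' : nat -> nat) k : 0 < k <= N ->
  m k = (m' k).+1 -> (forall j, j != k -> m j = m' j) ->
  zprod N m = k * m k * zprod N m'.
Proof.
move=> /andP [k_gt0 k_le] mk mj; have ltk : k.-1 < N by rewrite prednK.
rewrite /zprod !big_mkord (bigD1 (Ordinal ltk)) //= [in RHS](bigD1 (Ordinal ltk)) //=.
rewrite prednK // mk expnS factS.
rewrite (eq_bigr (fun i : 'I_N => i.+1 ^ m' i.+1 * (m' i.+1)`!)); first ring.
move=> i neq_ik; rewrite mj //; apply: contraNneq neq_ik => eq_ik.
by apply/eqP/val_inj; rewrite /= -eq_ik.
Qed.

Section Centralizer.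
Variables (T : finType) (s : {perm T}).
Implicit Types (A : {set T}) (t : {perm T}) (x y z : T).

Definition s_closed A := forall z, (s z \in A) = (z \in A).

Definition cent_on A : {set {perm T}} := ('C[s] :&: 'C(~: A | 'P))%g.

Definition cycles_in A k := [set c in cycles s k | c \subset A].

Lemma mem_cycles_in A k c :
  (c \in cycles_in A k) = [&& c \in porbits s, #|c| == k & c \subset A].
Proof. by rewrite !inE andbA. Qed.

Lemma cent_onP A t : reflect
  ((forall z, t (s z) = s (t z)) /\ (forall z, z \notin A -> t z = z))
  (t \in cent_on A).
Proof.
rewrite in_setI; apply: (iffP andP) => [[/cent1P ts /astabP tA] | [ts tA]].
  split=> [z | z zA]; first by rewrite -!permM ts.
  by apply: tA; rewrite inE.
split; first by apply/cent1P/permP => z; rewrite !permM ts.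
by apply/astabP => z; rewrite inE => /tA.
Qed.

Lemma conj_commuting t : (forall z, t (s z) = s (t z)) -> (s ^ t)%g = s.
Proof. by move=> ts; apply/permP => z; rewrite -{1}(permKV t z) permJ ts permKV. Qed.

Lemma cycle_len_commuting t x :
  (forall z, t (s z) = s (t z)) -> cycle_len s (t x) = cycle_len s x.
Proof.
move=> /conj_commuting ts; rewrite /cycle_len -{1}ts porbit_conj.
by apply: card_imset; apply: perm_inj.
Qed.

Lemma porbit_sub A x : s_closed A -> x \in A -> porbit s x \subset A.
Proof.
move=> sA xA; apply/subsetP => _ /porbitP [i ->]; rewrite permX.
by elim: i => //= i IHi; rewrite sA.
Qed.

Lemma s_closedD A x : s_closed A -> s_closed (A :\: porbit s x).
Proof.
by move=> sA z; rewrite !in_setD sA porbit_sym porbit_step porbit_sym.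
Qed.

Section SwapCycles.
Variables (A : {set T}) (x y : T).
Hypotheses (sA : s_closed A) (xA : x \in A) (yA : y \in A).
Hypothesis len_xy : cycle_len s y = cycle_len s x.

Let cmatch := tperm (porbit s x) (porbit s y).
Let rootu (c : {set T}) := if c == porbit s x then x else odflt x [pick z in c].
Let rootv (c : {set T}) := if c == porbit s y then y else odflt x [pick z in c].

Let cmatch_porbits : {in porbits s, forall c, cmatch c \in porbits s}.
Proof. by move=> c cP; rewrite /cmatch; case: tpermP; rewrite ?porbit_porbits. Qed.

Let card_cmatch : {in porbits s, forall c, #|cmatch c| = #|c|}.
Proof.
have len_xy' : #|porbit s y| = #|porbit s x| := len_xy.
by move=> c _; rewrite /cmatch; case: tpermP => // ->; rewrite len_xy'.
Qed.

Let cmatch_inj : {in porbits s &, injective cmatch}.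
Proof. by move=> c1 c2 _ _; apply: perm_inj. Qed.

Let rootu_mem : {in porbits s, forall c, rootu c \in c}.
Proof.
move=> c cP; rewrite /rootu; case: eqP => [->|_]; first exact: porbit_id.
exact: (pick_porbits x cP).
Qed.

Let rootv_mem : {in porbits s, forall c, rootv c \in c}.
Proof.
move=> c cP; rewrite /rootv; case: eqP => [->|_]; first exact: porbit_id.
exact: (pick_porbits x cP).
Qed.

Lemma cent_on_swap : exists2 t, t \in cent_on A & t x = y.
Proof.
pose t := transport_perm cmatch_porbits card_cmatch cmatch_inj rootu_mem rootv_mem.
have tE z : t z = transport s s cmatch rootu rootv z by rewrite permE.
exists t; last first.
  have rootx : rootu (porbit s x) = x by rewrite /rootu eqxx.
  by rewrite tE -{1}rootx transport_root ?porbit_porbits // /cmatch tpermL /rootv eqxx.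
apply/cent_onP; split=> z; first by rewrite !tE transport_step.
have other_cycle w : w \in A -> z \notin A -> porbit s z != porbit s w.
  move=> wA; apply: contra => /eqP eq_zw.
  by rewrite (subsetP (porbit_sub sA wA)) // -eq_zw porbit_id.
move=> zA; have zx := other_cycle _ xA zA; have zy := other_cycle _ yA zA.
rewrite tE; apply: transport_fixed => //.
  by rewrite /cmatch tpermD // eq_sym.
by rewrite /rootu /rootv (negbTE zx) (negbTE zy).
Qed.

End SwapCycles.

Lemma orbit_cent_on A x : s_closed A -> x \in A ->
  orbit 'P (cent_on A) x = [set y in A | cycle_len s y == cycle_len s x].
Proof.
move=> sA xA; apply/setP => y; rewrite inE; apply/imsetP/andP.
  case=> t /cent_onP [ts tA] ->; rewrite /= apermE cycle_len_commuting // eqxx.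
  split=> //; apply: contraT => txA.
  by have /perm_inj tx := tA _ txA; rewrite tx xA in txA.
by case=> yA /eqP len_xy; have [t tA <-] := cent_on_swap sA xA yA len_xy; exists t.
Qed.

Lemma stab_cent_on A x : s_closed A -> x \in A ->
  ('C_(cent_on A)[x | 'P])%g = cent_on (A :\: porbit s x).
Proof.
move=> sA xA; apply/setP => t; rewrite in_setI; apply/andP/cent_onP.
  case=> /cent_onP [ts tA] /astab1P /= tx; split=> // z.
  rewrite in_setD negb_and negbK => /orP [/porbitP [i ->] | /tA //].
  rewrite apermE in tx; rewrite permX.
  by elim: i => //= i IHi; rewrite ts IHi.
case=> ts tA; split.
  by apply/cent_onP; split=> // z zA; apply: tA; rewrite in_setD negb_and zA orbT.
by apply/astab1P; apply: tA; rewrite in_setD porbit_id.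
Qed.

Lemma card_cycle_len_eq A k : s_closed A ->
  #|[set y in A | cycle_len s y == k]| = #|cycles_in A k| * k.
Proof.
move=> sA; have -> : [set y in A | cycle_len s y == k] = cover (cycles_in A k).
  apply/setP => y; rewrite inE; apply/andP/bigcupP => [[yA /eqP len_y] | [c]].
    exists (porbit s y); last exact: porbit_id.
    by rewrite mem_cycles_in porbit_porbits porbit_sub // -/(cycle_len s y) len_y eqxx.
  rewrite mem_cycles_in => /and3P [/porbitsP [z ->] /eqP len_z subA] yz.
  by rewrite (subsetP subA) // (cycle_len_porbit yz) /cycle_len len_z.
have disj : trivIset (cycles_in A k).
  apply/trivIsetP => c1 c2; rewrite !mem_cycles_in.
  move=> /and3P [/porbitsP [z1 ->] _ _] /and3P [/porbitsP [z2 ->] _ _] neq_c.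
  rewrite -setI_eq0; apply: contraNT neq_c => /set0Pn [w /setIP [w1 w2]].
  by rewrite -(porbit_eq w1) (porbit_eq w2).
rewrite -sum_nat_const -(eqP disj).
by apply: eq_bigr => c; rewrite mem_cycles_in => /and3P [_ /eqP].
Qed.

Lemma card_cycles_inD A x k : s_closed A -> x \in A ->
  #|cycles_in A k| = (cycle_len s x == k) + #|cycles_in (A :\: porbit s x) k|.
Proof.
move=> sA xA; rewrite (cardsD1 (porbit s x)) mem_cycles_in porbit_porbits.
rewrite porbit_sub // andbT; congr addn; apply: eq_card => c.
rewrite inE !mem_cycles_in.
case: (boolP (c \in porbits s)) => [|_]; last by rewrite andbF.
case/porbitsP => z ->; case: (_ == k); rewrite /= ?andbF // in_set1.
apply/andP/idP => [[neq_zx subA] | subD].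
  apply/subsetP => w zw; rewrite in_setD (subsetP subA) // andbT.
  by apply: contra neq_zx => wx; apply/eqP; rewrite -(porbit_eq zw) (porbit_eq wx).
split; last exact: subset_trans subD (subsetDl _ _).
apply: contraTneq (subsetP subD z (porbit_id s z)) => eq_zx.
by rewrite in_setD -eq_zx porbit_id.
Qed.

Lemma cent_on0 : cent_on set0 = 1%g.
Proof.
apply/setP => t; rewrite in_set1; apply/cent_onP/eqP => [[_ t1] | ->].
  by apply/permP => z; rewrite perm1 t1 ?inE.
by split=> z; rewrite !perm1.
Qed.

Lemma cycles_in0 k : cycles_in set0 k = set0.
Proof.
apply/setP => c; rewrite !inE subset0.
case: (boolP (c \in porbits s)) => //= /porbitsP [z ->].
by rewrite -cards_eq0 (negbTE (card_porbit_neq0 _ _)) andbF.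
Qed.

(* Orbit-stabilizer at a point x of A: its orbit is the set of points of A on
   cycles of the same length, its stabilizer is cent_on (A minus the cycle of x). *)
Lemma card_cent_on A : s_closed A ->
  #|cent_on A| = zprod #|T| (fun k => #|cycles_in A k|).
Proof.
elim: {A}_.+1 {-2}A (ltnSn #|A|) => // m IHm A leA sA.
have [-> | [x xA]] := set_0Vmem A.
  by rewrite cent_on0 cards1 /zprod big1 // => i _; rewrite cycles_in0 cards0.
have ltA : #|A :\: porbit s x| < m.
  rewrite -ltnS (leq_trans _ leA) // ltnS; apply: proper_card; apply/properP.
  split; first exact: subsetDl.
  by exists x; rewrite // in_setD porbit_id.
have := card_orbit_stab 'P (cent_on A)%G x.
rewrite orbit_cent_on // stab_cent_on // (IHm _ ltA (s_closedD x sA)).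
rewrite card_cycle_len_eq // => <-.
rewrite (@zprod_step _ (fun k => #|cycles_in A k|)
  (fun k => #|cycles_in (A :\: porbit s x) k|) (cycle_len s x)).
- by congr (_ * _); apply: mulnC.
- by rewrite cycle_len_gt0 /cycle_len max_card.
- by rewrite (card_cycles_inD _ sA xA) eqxx.
by move=> j neq_j; rewrite (card_cycles_inD _ sA xA) eq_sym (negbTE neq_j).
Qed.

End Centralizer.

Section CycleType.
Variable n : nat.
Implicit Types (s t g : {perm 'I_n}).

Lemma cycle_len_le s x : cycle_len s x <= n.
Proof. by rewrite /cycle_len -[X in _ <= X](card_ord n) max_card. Qed.

Lemma card_cycles_le s k : #|cycles s k| <= n.
Proof.
apply: leq_trans (subset_leq_card (_ : cycles s k \subset porbits s)) _.
  by apply/subsetP => c /setIdP [].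
by rewrite (leq_trans (leq_imset_card _ _)) // card_ord.
Qed.

Lemma ctypeE s (i : 'I_n) : ctype s i = #|cycles s i.+1| :> nat.
Proof. by rewrite ffunE inordK // ltnS card_cycles_le. Qed.

Lemma cycles_out s k : (k == 0) || (n < k) -> cycles s k = set0.
Proof.
move=> k_out; apply/setP => c; rewrite !inE.
case: (boolP (c \in porbits s)) => //= /porbitsP [z ->].
apply: contraTF k_out => /eqP <-; rewrite negb_or -lt0n -leqNgt.
by apply/andP; split; [exact: cycle_len_gt0 | exact: cycle_len_le].
Qed.

Lemma cycles_setT s : cycles_in s setT =1 cycles s.
Proof. by move=> k; apply/setP => c; rewrite !inE subsetT andbT. Qed.

Lemma ctype_conj s g : ctype (s ^ g)%g = ctype s.
Proof. by apply/ffunP => i; rewrite !ffunE card_cycles_conj. Qed.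

Lemma ctype_eq_conj s t : ctype t = ctype s -> exists g, t = (s ^ g)%g.
Proof.
move=> eq_ts; apply: conj_same_cycles => k.
have [k_out | k_in] := boolP ((k == 0) || (n < k)); first by rewrite !cycles_out.
have ltk : k.-1 < n by move: k_in; rewrite negb_or -leqNgt; lia.
have := congr1 (fun l : partn_t n => nat_of_ord (l (Ordinal ltk))) eq_ts.
by rewrite /= !ctypeE /= prednK // lt0n; case/norP: k_in.
Qed.

Lemma card_cent1_perm s : #|'C[s]%g| = zee (ctype s).
Proof.
have -> : 'C[s]%g = cent_on s setT.
  apply/setP => t; apply/cent1P/cent_onP => [ts | [ts _]].
    by split=> z; [rewrite -!permM ts | rewrite inE].
  by apply/permP => z; rewrite !permM ts.
rewrite card_cent_on; last by move=> z; rewrite !inE.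
rewrite (card_ord n) /zprod big_mkord /zee.
by apply: eq_bigr => i _; rewrite ctypeE cycles_setT.
Qed.

Lemma card_ctype_class s : #|[set t | ctype t == ctype s]| * zee (ctype s) = n`!.
Proof.
have -> : [set t | ctype t == ctype s] = (s ^: [set: {perm 'I_n}])%g.
  apply/setP => t; rewrite inE; apply/eqP/imsetP => [/ctype_eq_conj [g ->] | [g _ ->]].
    by exists g.
  exact: ctype_conj.
rewrite -card_cent1_perm -(index_cent1 [set: {perm 'I_n}]%G) -card_Sn -cardsT.
by rewrite setTI mulnC Lagrange ?subsetT.
Qed.

Lemma is_partn_ctype s : is_partn (ctype s).
Proof.
have lenP y : (cycle_len s y).-1 < n by rewrite prednK ?cycle_len_gt0 ?cycle_len_le.
apply/eqP; transitivity (\sum_(i < n) \sum_(y | xpredT y && (Ordinal (lenP y) == i)) 1).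
  apply: eq_bigr => i _; rewrite sum1_card mulnC ctypeE -cycles_setT.
  rewrite -card_cycle_len_eq; last by move=> z; rewrite !inE.
  apply: eq_card => y; rewrite !inE -[RHS]/((cycle_len s y).-1 == i).
  by apply/eqP/eqP => [-> // | <-]; rewrite prednK ?cycle_len_gt0.
by rewrite -(partition_big _ xpredT) // sum1_card card_ord.
Qed.

End CycleType.

Section Relabeling.
Variable n : nat.
Implicit Types (s t : {perm 'I_n}) (p q : {perm 'I_n.-2}).
Implicit Types (G : graph n) (C : {set graph n}).

Lemma vmap1 : vmap (1 : {perm 'I_n}) (1 : {perm 'I_n.-2}) =1 id.
Proof. by case=> i /=; rewrite perm1. Qed.

Lemma vmapM s t p q : vmap (s * t) (p * q) =1 vmap t q \o vmap s p.
Proof. by case=> i /=; rewrite permM. Qed.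

Lemma vmapK s p : cancel (vmap s p) (vmap s^-1 p^-1).
Proof. by case=> i /=; rewrite permK. Qed.

Lemma vmapKV s p : cancel (vmap s^-1 p^-1) (vmap s p).
Proof. by case=> i /=; rewrite permKV. Qed.

Lemma vmap_inj s p : injective (vmap s p).
Proof. exact: can_inj (vmapK s p). Qed.

Lemma vmap_relabelC s p v : vmap s 1 (vmap 1 p v) = vmap 1 p (vmap s 1 v).
Proof. by case: v => i /=; rewrite !perm1. Qed.

Lemma gmap_comp (f g : V n -> V n) G : gmap f (gmap g G) = gmap (f \o g) G.
Proof. by rewrite /gmap -imset_comp. Qed.

Lemma eq_gmap (f g : V n -> V n) G : f =1 g -> gmap f G = gmap g G.
Proof. by move=> eq_fg; apply: eq_imset => e; rewrite !eq_fg. Qed.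

Lemma gmap_id G : gmap id G = G.
Proof. by rewrite /gmap (eq_imset (g := id)) ?imset_id // => -[]. Qed.

Lemma mem_gmap (f : V n -> V n) G a b : injective f ->
  ((f a, f b) \in gmap f G) = ((a, b) \in G).
Proof.
move=> f_inj; apply: (mem_imset (f := fun e : V n * V n => (f e.1, f e.2)) G (a, b)).
by move=> [? ?] [? ?] [/f_inj -> /f_inj ->].
Qed.

Lemma deg_gmap s p G x : deg (gmap (vmap s p) G) (vmap s p x) = deg G x.
Proof.
rewrite /deg -[RHS](card_imset _ (@vmap_inj s p)); apply: eq_card => y.
rewrite inE; apply/idP/imsetP => [|[z]].
  rewrite -{1}(vmapKV s p y) mem_gmap; last exact: vmap_inj.
  by exists (vmap s^-1 p^-1 y); rewrite ?inE ?vmapKV.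
by rewrite inE => xz ->; rewrite mem_gmap //; apply: vmap_inj.
Qed.

Lemma connect_gmap s p G a b :
  connect (fun x y => (x, y) \in G) a b ->
  connect (fun x y => (x, y) \in gmap (vmap s p) G) (vmap s p a) (vmap s p b).
Proof.
case/connectP => P GP ->; apply/connectP; exists (map (vmap s p) P); last first.
  by rewrite last_map.
by apply: homo_path GP => x y xy; rewrite mem_gmap //; apply: vmap_inj.
Qed.

Lemma is_ubtree_gmap s p G : is_ubtree G -> is_ubtree (gmap (vmap s p) G).
Proof.
have vmapE := vmapKV s p; have vmap_mem := mem_gmap _ _ _ (@vmap_inj s p).
case/and5P => loopless sym conn card_edges /andP [leaves inner].
apply/and5P; split; last apply/andP; try split.
- by apply/forallP => x; rewrite -(vmapE x) vmap_mem (forallP loopless).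
- apply/forallP => x; apply/forallP => y.
  by rewrite -(vmapE x) -(vmapE y) !vmap_mem (forallP (forallP sym _)).
- apply/forallP => x; apply/forallP => y.
  by rewrite -(vmapE x) -(vmapE y) connect_gmap // (forallP (forallP conn _)).
- rewrite /gmap card_imset //.
  by move=> [? ?] [? ?] [/vmap_inj -> /vmap_inj ->].
- apply/forallP => i; have -> : inl i = vmap s p (inl (s^-1%g i)) by rewrite /= permKV.
  by rewrite deg_gmap (forallP leaves).
- apply/forallP => j; have -> : inr j = vmap s p (inr (p^-1%g j)) by rewrite /= permKV.
  by rewrite deg_gmap (forallP inner).
Qed.

Lemma isoclass_act s G : G \in UBT n ->
  actT s (isoclass G) = isoclass (gmap (vmap s 1) G).
Proof.
rewrite inE => treeG; apply/setP => K; apply/imsetP/idP.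
  case=> H; rewrite inE => /andP [_ /existsP [p /eqP <-]] ->.
  rewrite !inE !is_ubtree_gmap //=; apply/existsP; exists p.
  by rewrite !gmap_comp; apply/eqP/eq_gmap => v /=; rewrite vmap_relabelC.
rewrite inE => /andP [_ /existsP [p /eqP <-]].
exists (gmap (vmap 1 p) G).
  by rewrite !inE is_ubtree_gmap //=; apply/existsP; exists p.
by rewrite !gmap_comp; apply/eq_gmap => v /=; rewrite vmap_relabelC.
Qed.

Lemma actT1 C : actT 1 C = C.
Proof.
rewrite /actT (eq_imset (g := id)) ?imset_id // => G.
by rewrite (eq_gmap _ vmap1) gmap_id.
Qed.

Lemma actTM s t C : actT (s * t) C = actT t (actT s C).
Proof.
rewrite /actT -imset_comp; apply: eq_imset => G /=.
by rewrite gmap_comp; apply: eq_gmap => v; rewrite -vmapM mulg1.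
Qed.

Lemma actTK s : cancel (actT s) (actT s^-1).
Proof. by move=> C; rewrite -actTM mulgV actT1. Qed.

Lemma actTKV s : cancel (actT s^-1) (actT s).
Proof. by move=> C; rewrite -actTM mulVg actT1. Qed.

Definition tree_action :=
  @TotalAction _ _ (fun C s => actT s C) (fun C => actT1 C) (fun C s t => actTM s t C).

Lemma actT_Trees s C : (actT s C \in Trees n) = (C \in Trees n).
Proof.
have actT_tree t D : D \in Trees n -> actT t D \in Trees n.
  case/imsetP => G treeG ->; rewrite isoclass_act // imset_f //.
  by move: treeG; rewrite !inE; apply: is_ubtree_gmap.
by apply/idP/idP => [/(actT_tree s^-1%g) | /actT_tree //]; rewrite actTK.
Qed.

End Relabeling.

Section UnorderedPairs.
Variables (X : finType) (S : {set X}) (phi : X -> X).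
Hypothesis phi_inj : injective phi.
Hypothesis phiS : forall x, (phi x \in S) = (x \in S).

Definition upair (x : X * X) : {set X} := [set x.1; x.2].

Definition upairs : {set {set X}} := upair @: setX S S.

Definition fixed_upairs := [set P in upairs | phi @: P == P].

Definition fixed_pairs := [set x in setX S S | phi @: upair x == upair x].

Definition fixed_points := [set x in S | phi x == x].

Definition fixed2_points := [set x in S | phi (phi x) == x].

Lemma upair_fixed a b : (phi @: upair (a, b) == upair (a, b)) =
  ((phi a == a) && (phi b == b)) || ((phi a == b) && (phi b == a)).
Proof.
rewrite /upair imsetU1 imset_set1 /=; apply/eqP/idP => [eq_ab | ].
  have /set2P pa : phi a \in [set a; b] by rewrite -eq_ab set21.
  have /set2P pb : phi b \in [set a; b] by rewrite -eq_ab set22.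
  case: pa pb => pa [] pb; rewrite pa pb ?eqxx ?orbT //;
    by rewrite (phi_inj (etrans pa (esym pb))) eqxx.
by case/orP => /andP [/eqP -> /eqP ->] //; rewrite setUC.
Qed.

(* The fixed ordered pairs are the pairs of fixed points together with the
   pairs (a, phi a) for a of period at most 2; the two families meet on the
   diagonal of fixed points. *)
Lemma card_fixed_pairs :
  #|fixed_pairs| + #|fixed_points| = #|fixed_points| ^ 2 + #|fixed2_points|.
Proof.
pose swapped := [set (a, phi a) | a in fixed2_points].
have diag_inj : injective (fun a : X => (a, a)) by move=> a b [].
have -> : fixed_pairs = setX fixed_points fixed_points :|: swapped.
  apply/setP => -[a b]; rewrite !inE /= upair_fixed.
  apply/idP/idP => [/andP [/andP [aS bS] /orP [/andP [-> ->] | /andP [/eqP pa pb]]] |].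
  - by rewrite aS bS.
  - move: pb; rewrite -pa => ppa; apply/orP; right; apply/imsetP.
    by exists a; rewrite // inE aS ppa.
  case/orP => [/andP [/andP [aS ->] /andP [bS ->]] | /imsetP [c]].
    by rewrite aS bS.
  by rewrite inE => /andP [cS pc] [-> ->]; rewrite cS phiS cS eqxx pc orbT.
have eq_I : setX fixed_points fixed_points :&: swapped =
            [set (a, a) | a in fixed_points].
  apply/setP => -[a b]; rewrite !inE /=; apply/andP/imsetP.
    case=> /andP [/andP [aS pa] _] /imsetP [c _ [ac ->]].
    by exists a; rewrite ?inE ?aS ?pa // -ac (eqP pa).
  case=> c /setIdP [cS /eqP pc] [-> ->]; rewrite cS pc eqxx; split=> //.
  by apply/imsetP; exists c; rewrite ?inE ?cS ?pc // eqxx.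
have := cardsUI (setX fixed_points fixed_points) swapped.
rewrite eq_I cardsX !card_imset //.
by move=> a b [].
Qed.

Lemma upair_fiber a b :
  [set x | upair x == upair (a, b)] = [set (a, b); (b, a)].
Proof.
apply/setP => -[c d]; rewrite !inE /upair /=.
apply/eqP/idP => [eq_cd | /orP [] /eqP [-> ->] //]; last exact: setUC.
have /set2P ca : c \in [set a; b] by rewrite -eq_cd set21.
have /set2P db : d \in [set a; b] by rewrite -eq_cd set22.
have /set2P ac : a \in [set c; d] by rewrite eq_cd set21.
have /set2P bd : b \in [set c; d] by rewrite eq_cd set22.
by case: ca db ac bd => -> [] -> [] ? [] ?; subst; rewrite !eqxx ?orbT.
Qed.

Lemma card_upair_fiber a b : #|[set x | upair x == upair (a, b)]| = #|upair (a, b)|.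
Proof. by rewrite upair_fiber !cards2 xpair_eqE; case: eqP => [->|]; rewrite ?eqxx. Qed.

Lemma upairsP P : reflect (exists2 x, x \in setX S S & P = upair x) (P \in upairs).
Proof. exact: imsetP. Qed.

(* A fixed unordered pair P has exactly #|P| ordered preimages, and #|P| = 1
   exactly when P is a singleton of a fixed point. *)
Lemma double_card_fixed_upairsE :
  2 * #|fixed_upairs| = #|fixed_pairs| + #|fixed_points|.
Proof.
have fixedP x : x \in setX S S -> (x \in fixed_pairs) = (upair x \in fixed_upairs).
  by move=> xS; rewrite [_ \in fixed_pairs]inE [_ \in fixed_upairs]inE xS imset_f.
have card_pairs : #|fixed_pairs| = \sum_(P in fixed_upairs) #|P|.
  rewrite -sum1_card (partition_big upair (mem fixed_upairs)) => [|x]; last first.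
    by move=> xF; have /setIdP [xS _] := xF; move: xF; rewrite fixedP.
  apply: eq_bigr => P /setIdP [/upairsP [[a b] abS ->] fixP].
  rewrite sum1_card -card_upair_fiber; apply: eq_card => -[c d]; rewrite !inE.
  apply/andP/idP => [[] // | fib]; split=> //.
  have cdS : (c, d) \in setX S S.
    move: abS; rewrite !inE /= => /andP [aS bS].
    have: c \in [set a; b] /\ d \in [set a; b].
      by move/eqP: (fib); rewrite /upair /= => <-; rewrite set21 set22.
    by case=> /set2P [] -> /set2P [] ->; rewrite ?aS ?bS.
  by rewrite fixedP // (eqP fib) inE fixP andbT imset_f.
have card_fixed_points : #|fixed_points| = \sum_(P in fixed_upairs | #|P| == 1) 1.
  rewrite -(card_imset _ (@set1_inj X)) -sum1_card; apply: eq_bigl => P; rewrite !inE.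
  apply/imsetP/andP => [[a /setIdP [aS pa] ->] |].
    rewrite cards1 imset_set1 (eqP pa) eqxx andbT; split=> //.
    by apply/upairsP; exists (a, a); rewrite ?inE ?aS // /upair setUid.
  case=> /andP [/upairsP [[a b] abS ->] fixP].
  rewrite /upair cards2 /=; have [eq_ab _ | //] := eqVneq a b; subst b.
  exists a; last by rewrite setUid.
  move: abS fixP; rewrite !inE /upair /= setUid imset_set1.
  by move=> /andP [aS _] /eqP/set1_inj pa; rewrite aS pa eqxx.
rewrite card_pairs card_fixed_points big_mkcondr -big_split mulnC -sum_nat_const /=.
apply: eq_bigr => _ /setIdP [/upairsP [[a b] _ ->] _].
by rewrite /upair cards2; case: (a != b).
Qed.

Lemma double_card_fixed_upairs :
  2 * #|fixed_upairs| = #|fixed_points| ^ 2 + #|fixed2_points|.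
Proof. by rewrite double_card_fixed_upairsE card_fixed_pairs. Qed.

End UnorderedPairs.

Section TanglegramCount.
Variable n : nat.
Implicit Types (s g : {perm 'I_n}) (C D : {set graph n}).

Lemma actT_inj s : injective (actT s).
Proof. exact: can_inj (actTK s). Qed.

Lemma fixU_conj s g : fixU (s ^ g)%g = fixU s.
Proof.
rewrite /fixU -[RHS](card_imset _ (@actT_inj g)); apply: eq_card => D.
rewrite inE conjgE !actTM; apply/andP/imsetP => [[treeD /eqP fixD] | [C]].
  exists (actT g^-1%g D); last by rewrite actTKV.
  by rewrite inE actT_Trees treeD; apply/eqP/(@actT_inj g); rewrite fixD actTKV.
by rewrite inE => /andP [treeC /eqP fixC] ->; rewrite actT_Trees treeC actTK fixC eqxx.
Qed.

Lemma fixU_ctype s t : ctype t = ctype s -> fixU t = fixU s.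
Proof. by case/ctype_eq_conj => g ->; apply: fixU_conj. Qed.

Lemma ulam_ctype s : ulam (ctype s) = fixU s.
Proof.
by rewrite /ulam; case: pickP => [t /eqP /fixU_ctype // | /(_ s)]; rewrite eqxx.
Qed.

Lemma ulam_lsq s : ulam (lsq (ctype s)) = fixU (s ^+ 2)%g.
Proof.
rewrite /lsq; case: pickP => [t /eqP | /(_ s)]; last by rewrite eqxx.
by case/ctype_eq_conj => g ->; rewrite -conjXg ctype_conj ulam_ctype.
Qed.

Lemma ulam_empty l : (forall s, ctype s != l) -> ulam l = 0 /\ lsq l = l.
Proof.
by move=> no_s; rewrite /ulam /lsq; case: pickP => // s; rewrite (negbTE (no_s s)).
Qed.

Definition pair_act (x : {set graph n} * {set graph n}) s := (actT s x.1, actT s x.2).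

Lemma pair_act1 x : pair_act x 1 = x.
Proof. by case: x => C D; rewrite /pair_act !actT1. Qed.

Lemma pair_actM x s t : pair_act x (s * t) = pair_act (pair_act x s) t.
Proof. by rewrite /pair_act !actTM. Qed.

Definition pair_action := TotalAction pair_act1 pair_actM.

Lemma tanglegrams_burnside :
  num_tanglegrams n * n`! = \sum_(s : {perm 'I_n}) fixU s ^ 2.
Proof.
have acts : [acts [set: {perm 'I_n}], on Tangle n | pair_action].
  by apply/actsP => s _ [C D]; rewrite !in_setX /= !actT_Trees.
have orbTE (x : {set graph n} * {set graph n}) :
    Defs.orbT x = orbit pair_action [set: {perm 'I_n}] x.
  by apply/setP => y; apply/imsetP/imsetP => -[s _ ->]; exists s.
rewrite /num_tanglegrams (eq_imset _ orbTE).
rewrite -(card_Sn n) -cardsT -Frobenius_Cauchy //.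
apply: eq_big => [s | s _]; first by rewrite inE.
rewrite -[fixU s ^ 2]/(fixU s * fixU s) -cardsX; apply: eq_card => -[C D].
rewrite !inE /= sub1set inE /pair_act /= xpair_eqE.
exact: andbACA.
Qed.

Lemma utanglegrams_burnside :
  2 * num_utanglegrams n * n`! = \sum_(s : {perm 'I_n}) (fixU s ^ 2 + fixU (s ^+ 2)%g).
Proof.
pose to := (tree_action n)^*%act.
have act_upair s x : to (upair x) s = upair (pair_act x s).
  by rewrite /= setactE /upair imsetU1 imset_set1.
have act_UTangle s P : P \in UTangle n -> to P s \in UTangle n.
  case/imsetP => -[C D] CDT ->; rewrite act_upair imset_f //.
  by move: CDT; rewrite /Tangle !in_setX /= !actT_Trees.
have acts : [acts [set: {perm 'I_n}], on UTangle n | to].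
  apply/actsP => s _ P; apply/idP/idP => [/(act_UTangle s^-1%g) | /(act_UTangle s) //].
  by rewrite actK.
have orbUE (U : {set {set graph n}}) : orbU U = orbit to [set: {perm 'I_n}] U.
  by apply/setP => Q; apply/imsetP/imsetP => -[t _ ->]; exists t.
rewrite /num_utanglegrams (eq_imset _ orbUE) -mulnA -(card_Sn n) -cardsT.
rewrite -Frobenius_Cauchy // big_distrr /=.
apply: eq_big => [s | s _]; first by rewrite inE.
have -> : ('Fix_(UTangle n | to)[s])%g = fixed_upairs (Trees n) (actT s).
  apply/setP => U; rewrite in_setI [in RHS]inE; congr andb.
  by apply/afix1P/eqP; rewrite /= setactE.
rewrite double_card_fixed_upairs => [||C]; last exact: actT_Trees.
  by congr (_ ^ 2 + _); apply: eq_card => C; rewrite !inE expgS expg1 actTM.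
exact: actT_inj.
Qed.

End TanglegramCount.

Import GRing.Theory Num.Theory.
Local Open Scope ring_scope.

Section ClassSums.
Variable n : nat.
Implicit Types s : {perm 'I_n}.

Lemma sum_by_cycle_type (F : {perm 'I_n} -> nat) (G : partn_t n -> nat) :
  (forall s, F s = G (ctype s)) -> (forall l, (forall s, ctype s != l) -> G l = 0%N) ->
  (\sum_s F s)%N%:R = (n`!)%:R * \sum_(l | is_partn l) (G l)%:R / (zee l)%:R :> rat.
Proof.
move=> FG G0.
rewrite (partition_big (@ctype n) (@is_partn n)) => [|s _]; last exact: is_partn_ctype.
rewrite natr_sum mulr_sumr; apply: eq_bigr => l _.
case: (pickP (fun s => ctype s == l)) => [s /eqP <- | no_s]; last first.
  by rewrite big_pred0 ?G0 ?mul0r ?mulr0 // => s; rewrite no_s.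
have -> : (\sum_(t | true && (ctype t == ctype s)) F t =
           #|[set t | ctype t == ctype s]| * G (ctype s))%N.
  rewrite -sum_nat_const; apply: eq_big => t; first by rewrite inE.
  by rewrite FG => /eqP ->.
have zee_neq0 : (zee (ctype s))%:R != 0 :> rat.
  by rewrite pnatr_eq0 -lt0n prodn_gt0 // => i; rewrite muln_gt0 expn_gt0 fact_gt0.
rewrite -(card_ctype_class s) !natrM; field.
by rewrite zee_neq0.
Qed.
End ClassSums.


Theorem mainTheorem2 (n : nat) (hn : (2 <= n)%N) :
  (num_tanglegrams n)%:R =
    \sum_(l : partn_t n | is_partn l) ((ulam l) ^ 2)%:R / (zee l)%:R :> rat
  /\
  (num_utanglegrams n)%:R =
    1 / 2 * (\sum_(l : partn_t n | is_partn l) ((ulam l) ^ 2)%:R / (zee l)%:R)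
    + 1 / 2 * (\sum_(l : partn_t n | is_partn l) (ulam (lsq l))%:R / (zee l)%:R) :> rat.
Proof.
(* The formulas hold for every n. *)
have fact_neq0 : (n`!)%:R != 0 :> rat by rewrite pnatr_eq0 -lt0n fact_gt0.
split.
  apply: (mulIf fact_neq0); rewrite -natrM tanglegrams_burnside mulrC.
  apply: (@sum_by_cycle_type _ (fun s => fixU s ^ 2)%N).
    by move=> s; rewrite ulam_ctype.
  by move=> l /ulam_empty [->].
pose sum_z (G : partn_t n -> nat) : rat :=
  \sum_(l : partn_t n | is_partn l) (G l)%:R / (zee l)%:R.
have burnside : (2 * num_utanglegrams n * n`!)%N%:R =
    (n`!)%:R * (sum_z (fun l => ulam l ^ 2)%N + sum_z (fun l => ulam (lsq l))) :> rat.
  rewrite utanglegrams_burnside /sum_z -big_split /=.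
  under eq_bigr do rewrite -mulrDl -natrD.
  apply: (@sum_by_cycle_type _ (fun s => fixU s ^ 2 + fixU (s ^+ 2)%g)%N).
    by move=> s; rewrite ulam_ctype ulam_lsq.
  by move=> l /ulam_empty [ul ->]; rewrite ul.
rewrite !natrM in burnside.
have two_fact_neq0 : 2 * (n`!)%:R != 0 :> rat by rewrite mulf_neq0.
apply: (mulIf two_fact_neq0); rewrite mulrA [_ * 2]mulrC burnside.
by rewrite /sum_z; field.
Qed.
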